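(* (1) $\mathcal{K}^{\mathsf{TJ}}(K_n)=\{k:k\ge1\}$ for every $n\ge1$. (2) $\mathcal{K}^{\mathsf{TJ}}(P_2)=\{k:k\ge1\}$, $\mathcal{K}^{\mathsf{TJ}}(P_n)=\{k:k\ge2\}$ for $n\ge3$; $\mathcal{K}^{\mathsf{TJ}}(C_3)=\{k:k\ge1\}$, $\mathcal{K}^{\mathsf{TJ}}(C_n)=\{k:k\ge2\}$ for $n\ge4$. (3) $\mathcal{K}^{\mathsf{TJ}}(K_{1,1})=\{k:k\ge1\}$, $\mathcal{K}^{\mathsf{TJ}}(K_{1,2})=\{k:k\ge2\}$, $\mathcal{K}^{\mathsf{TJ}}(K_{1,n})=\{k:k\ge n\}$ for $n\ge3$; and $\mathcal{K}^{\mathsf{TJ}}(K_{m,n})=\varnothing$ whenever $2\le m\le n$ and $n\ge3$. (4) $\mathcal{K}^{\mathsf{TJ}}(B_1)=\{k:k\ge1\}$, $\mathcal{K}^{\mathsf{TJ}}(B_2)=\{2\}$, and $\mathcal{K}^{\mathsf{TJ}}(B_p)=\varnothing$ for $p\ge3$. (5) $\mathcal{K}^{\mathsf{TJ}}(F_1)=\{k:k\ge1\}$ and $\mathcal{K}^{\mathsf{TJ}}(F_p)=\{k:k\ge p\}$ for $p\ge2$.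
   Context: All graphs are finite, simple, undirected. A $k$-clique of a graph $H$ is a set of $k$ pairwise adjacent vertices. For a graph $H$ and integer $k\ge1$, the Token Jumping graph $\mathsf{TJ}_k(H)$ has as vertices the $k$-cliques of $H$, and two $k$-cliques $A,B$ are adjacent iff $|A\cap B|=k-1$. For a graph $G$, $\mathcal{K}^{\mathsf{TJ}}(G)=\{k\ge1:\ \exists H,\ \mathsf{TJ}_k(H)\cong G\}$. $K_n$, $P_n$, $C_n$ denote the complete graph, path, cycle on $n$ vertices; $K_{m,n}$ the complete bipartite graph. The book graph $B_p$ consists of $p$ triangles sharing a common edge; the friendship graph $F_p$ consists of $p$ triangles sharing a common vertex. *)

From mathcomp Require Import all_boot.
Set Implicit Arguments. Unset Strict Implicit. Unset Printing Implicit Defensive.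

Definition simple_graph (V : finType) (e : rel V) : Prop :=
  symmetric e /\ irreflexive e.

Definition is_kclique (T : finType) (H : rel T) (k : nat) (A : {set T}) : bool :=
  (#|A| == k) && [forall x in A, forall y in A, (x != y) ==> H x y].

(* TJ_k(H) is isomorphic to the graph (V, e): there is a bijection f from V
   onto the set of k-cliques of H such that x ~ y iff |f x ∩ f y| = k - 1. *)
Definition TJ_iso (V : finType) (e : rel V) (T : finType) (H : rel T) (k : nat) : Prop :=
  exists f : V -> {set T},
    injective f /\
    (forall A : {set T}, is_kclique H k A <-> exists x : V, f x = A) /\
    (forall x y : V, e x y = (#|f x :&: f y| == k.-1)).

Definition KTJ (V : finType) (e : rel V) (k : nat) : Prop :=
  1 <= k /\ exists (T : finType) (H : rel T), simple_graph H /\ TJ_iso e H k.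

Definition complete_rel (n : nat) : rel 'I_n := fun x y => x != y.
Definition path_rel (n : nat) : rel 'I_n :=
  fun x y => ((x : nat).+1 == y) || ((y : nat).+1 == x).
Definition cycle_rel (n : nat) : rel 'I_n :=
  fun x y => (((x : nat).+1 %% n) == y) || (((y : nat).+1 %% n) == x).
Definition cbip_rel (m n : nat) : rel ('I_m + 'I_n)%type :=
  fun x y => match x, y with
             | inl _, inr _ => true
             | inr _, inl _ => true
             | _, _ => false
             end.
(* Book graph B_p on 'I_(p+2): spine edge {0,1}, apexes 2..p+1 each adjacent to 0 and 1 *)
Definition book_rel (p : nat) : rel 'I_(p.+2) :=
  fun x y => (x != y) && (((x : nat) < 2) || ((y : nat) < 2)).
(* Friendship graph F_p on 'I_(2p+1): center 0; triangles {0, 2i+1, 2i+2} *)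
Definition friend_rel (p : nat) : rel 'I_(p.*2.+1) :=
  fun x y => (x != y) &&
    [|| (x : nat) == 0, (y : nat) == 0 | ((x : nat).-1)./2 == ((y : nat).-1)./2].

Arguments complete_rel n : clear implicits.
Arguments path_rel n : clear implicits.
Arguments cycle_rel n : clear implicits.
Arguments cbip_rel m n : clear implicits.
Arguments book_rel p : clear implicits.
Arguments friend_rel p : clear implicits.

From mathcomp Require Import all_boot zify.
Set Implicit Arguments. Unset Strict Implicit. Unset Printing Implicit Defensive.

(* Adjacent vertices share exactly [k-1]
   tokens, so a neighbour [y] of [x] misses exactly one token of [f x], and
   independent neighbours miss distinct ones: an independent set inside a
   neighbourhood has at most [k] vertices.  Common neighbours of a non-edge
   [x x'] all contain the [(k-2)]-set [f x :&: f x'] and a token of the 2-set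
   [f x :\: f x']; common neighbours of an edge [x x'] either contain
   [f x :&: f x'] or lie in the [(k+1)]-set [f x :|: f x'].  Two common
   neighbours making the same choice are adjacent, which excludes induced
   [K_{2,3}] and [B_3].  In [B_2] with [k >= 3], an apex not containing
   [f x :&: f x'] makes [f x :|: f x'] a [(k+1)]-clique of [H], whose
   [k]-subsets give a fifth vertex.
   Conversely, joining [K_c] to a host with no clique larger than [j] lifts a
   representation at level [j] to level [j + c]; representations at the least
   level come from singletons (complete graphs), line graphs (paths, cycles,
   and the paw for [B_2]) and a cone construction (stars, friendship graphs). *)

Definition is_clique (T : finType) (H : rel T) (A : {set T}) : bool :=
  [forall x in A, forall y in A, (x != y) ==> H x y].

Lemma is_cliqueP (T : finType) (H : rel T) (A : {set T}) :
  reflect (forall a b, a \in A -> b \in A -> a != b -> H a b) (is_clique H A).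
Proof.
apply: (iffP forallP) => [cl a b aA bA ab | cl a].
  by have /implyP/(_ aA)/forallP/(_ b)/implyP/(_ bA)/implyP/(_ ab) := cl a.
by apply/implyP=> aA; apply/forallP=> b; apply/implyP=> bA; apply/implyP; apply: cl.
Qed.

Lemma is_clique_sub (T : finType) (H : rel T) (A B : {set T}) :
  A \subset B -> is_clique H B -> is_clique H A.
Proof.
move=> /subsetP AB /is_cliqueP clB; apply/is_cliqueP=> a b aA bA.
exact: clB (AB a aA) (AB b bA).
Qed.

Lemma setD1_setD (T : finType) (A B : {set T}) a :
  A :\: B = [set a] -> A :\ a = A :&: B.
Proof.
move/setP=> AB; apply/setP=> z; have := AB z; rewrite !inE.
by case: (z \in A); case: (z \in B); case: (z == a).
Qed.

Definition independent (V : finType) (e : rel V) (Y : {set V}) : Prop :=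
  forall y y', y \in Y -> y' \in Y -> y != y' -> ~~ e y y'.

Section Representation.
Variables (V T : finType) (e : rel V) (H : rel T) (k : nat) (f : V -> {set T}).
Hypotheses (f_inj : injective f)
  (f_cliques : forall A : {set T}, is_kclique H k A <-> exists x : V, f x = A)
  (eE : forall x y : V, e x y = (#|f x :&: f y| == k.-1)).

Lemma card_f x : #|f x| = k.
Proof. by have /andP[/eqP] : is_kclique H k (f x) by apply/f_cliques; exists x. Qed.

Lemma f_clique x : is_clique H (f x).
Proof. by have /andP[] : is_kclique H k (f x) by apply/f_cliques; exists x. Qed.

Lemma kclique_sub_f (U A : {set T}) : is_clique H U -> A \subset U -> #|A| = k ->
  exists z, f z = A.
Proof.
move=> clU AU cA; apply/f_cliques/andP; split; first by rewrite cA.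
exact: is_clique_sub AU clU.
Qed.

Lemma card_fI_lt x y : x != y -> #|f x :&: f y| < k.
Proof.
move=> xy; rewrite -(card_f x) ltn_neqAle subset_leq_card ?subsetIl // andbT.
apply: contra xy => /eqP cI; apply/eqP/f_inj/eqP.
rewrite eqEcard !card_f leqnn andbT.
have/eqP <- : f x :&: f y == f x by rewrite eqEcard subsetIl cI leqnn.
exact: subsetIr.
Qed.

Lemma card_fI_adj x y : e x y -> #|f x :&: f y| = k.-1.
Proof. by rewrite eE => /eqP. Qed.

Lemma card_fI_nonadj x y : x != y -> ~~ e x y -> (#|f x :&: f y|).+2 <= k.
Proof. by move=> xy; have := card_fI_lt xy; rewrite eE; lia. Qed.

Lemma adj_of_common x y (S : {set T}) : x != y ->
  S \subset f x -> S \subset f y -> k.-1 <= #|S| -> e x y.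
Proof.
move=> xy Sx Sy cS; have := card_fI_lt xy; rewrite eE.
have : #|S| <= #|f x :&: f y| by rewrite subset_leq_card // subsetI Sx Sy.
lia.
Qed.

Hypothesis k_gt0 : 0 < k.

Lemma adj_setD x y : e x y -> exists2 a, a \in f x & f x :\: f y = [set a].
Proof.
move=> exy; have := cardsID (f y) (f x); rewrite card_fI_adj // card_f => cD.
have /cards1P[a Da] : #|f x :\: f y| == 1 by apply/eqP; lia.
exists a => //; have : a \in f x :\: f y by rewrite Da set11.
by rewrite inE => /andP[].
Qed.

Lemma card_fU_adj x x' : e x x' -> #|f x :|: f x'| = k.+1.
Proof. by move=> exx'; have := cardsUI (f x) (f x'); rewrite !card_f card_fI_adj //; lia. Qed.

Lemma independent_nbrs_leq x (N : {set V}) :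
  (forall y, y \in N -> e x y) -> independent e N -> #|N| <= k.
Proof.
move=> xN indN.
have missing_inj : {in N &, injective (fun y => f x :\: f y)}.
  move=> y y' yN y'N /= Dyy'; case: (eqVneq y y') => // yy'.
  have /negP[] := indN y y' yN y'N yy'.
  have [a ax Da] := adj_setD (xN y yN).
  have Da' : f x :\: f y' = [set a] by rewrite -Dyy'.
  apply: (adj_of_common (S := f x :\ a)) yy' _ _ _.
  - by rewrite (setD1_setD Da) subsetIr.
  - by rewrite (setD1_setD Da') subsetIr.
  - by have := cardsD1 a (f x); rewrite ax card_f; lia.
rewrite -(card_in_imset missing_inj) -(card_f x) -(card_imset (f x) (@set1_inj T)).
apply/subset_leq_card/subsetP=> _ /imsetP[y yN ->].
by have [a ax ->] := adj_setD (xN y yN); apply: imset_f.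
Qed.

Lemma nonadj_common_nbr x x' y : x != x' -> ~~ e x x' -> e x y -> e x' y ->
  [/\ (#|f x :&: f x'|).+2 = k, f x :&: f x' \subset f y
    & ~~ (f y :&: f x \subset f x')].
Proof.
move=> xx' nxx' exy ex'y.
have cx : #|f y :&: f x| = k.-1 by rewrite setIC card_fI_adj.
have cx' : #|f y :&: f x'| = k.-1 by rewrite setIC card_fI_adj.
have cU : #|f y :&: f x :|: f y :&: f x'| <= k.
  by rewrite -(card_f y) subset_leq_card // -setIUr subsetIl.
have cUI := cardsUI (f y :&: f x) (f y :&: f x'); rewrite -setIIr in cUI.
have cC : #|f y :&: (f x :&: f x')| <= #|f x :&: f x'|.
  by rewrite subset_leq_card ?subsetIr.
have lt := card_fI_nonadj xx' nxx'.
have Cy : f y :&: (f x :&: f x') = f x :&: f x'.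
  by apply/eqP; rewrite eqEcard subsetIr /=; clear -cx cx' cU cUI cC lt; lia.
split; [lia | by rewrite -Cy subsetIl | apply/negP => yxx'].
have : #|f y :&: f x| <= #|f y :&: (f x :&: f x')|.
  by rewrite subset_leq_card // setIA subsetI subxx.
lia.
Qed.

Lemma nonadj_common_nbrs_leq2 x x' (Y : {set V}) : x != x' -> ~~ e x x' ->
  (forall y, y \in Y -> e x y && e x' y) -> independent e Y -> #|Y| <= 2.
Proof.
move=> xx' nxx' Yxx' indY; rewrite leqNgt; apply/negP => /card_gt2P.
case=> y1 [y2 [y3 [[y1Y y2Y y3Y] [d12 d23 d31]]]].
have /andP[exy1 ex'y1] := Yxx' y1 y1Y.
have [cC _ _] := nonadj_common_nbr xx' nxx' exy1 ex'y1.
have cD : #|f x :\: f x'| = 2.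
  by have := cardsID (f x') (f x); rewrite card_f => cID; clear -cC cID; lia.
have private y : y \in Y -> exists2 z, z \in f y & z \in f x :\: f x'.
  move=> /Yxx' /andP[exy ex'y]; have [_ _] := nonadj_common_nbr xx' nxx' exy ex'y.
  by case/subsetPn=> z; rewrite !inE => /andP[zy zx] zx'; exists z => //; rewrite inE zx zx'.
have distinct y y' z z' : y \in Y -> y' \in Y -> y != y' ->
    z \in f y -> z' \in f y' -> z \in f x :\: f x' -> z != z'.
  move=> yY y'Y yy' zy z'y' zD; apply: contraNneq (indY _ _ yY y'Y yy') => zz'.
  have /andP[exy ex'y] := Yxx' y yY; have /andP[exy' ex'y'] := Yxx' y' y'Y.
  have [_ Cy _] := nonadj_common_nbr xx' nxx' exy ex'y.
  have [_ Cy' _] := nonadj_common_nbr xx' nxx' exy' ex'y'.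
  apply: (adj_of_common (S := z |: (f x :&: f x'))) yy' _ _ _.
  - by rewrite subUset sub1set zy.
  - by rewrite subUset sub1set zz' z'y'.
  - by move: zD; rewrite cardsU1 !inE => /andP[/negPf-> _]; rewrite andbF -cC.
have [z1 z1y z1D] := private y1 y1Y.
have [z2 z2y z2D] := private y2 y2Y.
have [z3 z3y z3D] := private y3 y3Y.
have : 2 < #|f x :\: f x'|.
  apply/card_gt2P; exists z1, z2, z3; split => //.
  by split; [apply: (distinct y1 y2) | apply: (distinct y2 y3) | apply: (distinct y3 y1)].
by rewrite cD.
Qed.

Lemma adj_common_nbr_sub x x' y : e x x' -> e x y -> e x' y ->
  ~~ (f x :&: f x' \subset f y) -> f y \subset f x :|: f x'.
Proof.
move=> exx' exy ex'y nCy.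
have cx : #|f y :&: f x| = k.-1 by rewrite setIC card_fI_adj.
have cx' : #|f y :&: f x'| = k.-1 by rewrite setIC card_fI_adj.
have cUI := cardsUI (f y :&: f x) (f y :&: f x'); rewrite -setIIr -setIUr in cUI.
have lt : #|f y :&: (f x :&: f x')| < k.-1.
  rewrite -(card_fI_adj exx') ltn_neqAle subset_leq_card ?subsetIr // andbT.
  apply: contra nCy => /eqP cC.
  have/eqP <- : f y :&: (f x :&: f x') == f x :&: f x' by rewrite eqEcard subsetIr cC /=.
  exact: subsetIl.
have/eqP <- : f y :&: (f x :|: f x') == f y.
  by rewrite eqEcard subsetIl card_f /=; clear -cx cx' cUI lt; lia.
exact: subsetIr.
Qed.

Lemma adj_common_nbrs_adj x x' y y' : e x x' -> y != y' ->
  e x y -> e x' y -> e x y' -> e x' y' ->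
  (f x :&: f x' \subset f y) = (f x :&: f x' \subset f y') -> e y y'.
Proof.
move=> exx' yy' exy ex'y exy' ex'y'; case Cy: (_ \subset f y) => /esym Cy'.
  by apply: (adj_of_common (S := f x :&: f x')) => //; rewrite card_fI_adj.
have Uy := adj_common_nbr_sub exx' exy ex'y (negbT Cy).
have Uy' := adj_common_nbr_sub exx' exy' ex'y' (negbT Cy').
have : #|f y :|: f y'| <= k.+1 by rewrite -(card_fU_adj exx') subset_leq_card // subUset Uy.
have := cardsUI (f y) (f y'); rewrite !card_f => cUI cU.
by apply: (adj_of_common (S := f y :&: f y')) yy' _ _ _; rewrite ?subsetIl ?subsetIr //;
  clear -cUI cU; lia.
Qed.

Lemma adj_common_nbrs_leq2 x x' (Y : {set V}) : e x x' ->
  (forall y, y \in Y -> e x y && e x' y) -> independent e Y -> #|Y| <= 2.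
Proof.
move=> exx' Yxx' indY; rewrite leqNgt; apply/negP => /card_gt2P.
case=> y1 [y2 [y3 [[y1Y y2Y y3Y] [d12 d23 d31]]]].
pose b y := f x :&: f x' \subset f y.
have b_neq y y' : y \in Y -> y' \in Y -> y != y' -> b y != b y'.
  move=> yY y'Y yy'; apply: contra (indY _ _ yY y'Y yy') => /eqP.
  have /andP[exy ex'y] := Yxx' y yY; have /andP[exy' ex'y'] := Yxx' y' y'Y.
  exact: adj_common_nbrs_adj.
move: (b_neq _ _ y1Y y2Y d12) (b_neq _ _ y2Y y3Y d23) (b_neq _ _ y3Y y1Y d31).
by case: (b y1); case: (b y2); case: (b y3).
Qed.

Lemma triangle_union_clique x x' w : e x x' -> e x w -> e x' w ->
  ~~ (f x :&: f x' \subset f w) -> is_clique H (f x :|: f x').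
Proof.
move=> exx' exw ex'w nCw.
have wU := adj_common_nbr_sub exx' exw ex'w nCw.
have [c cC cw] := subsetPn nCw.
have cU : c \in f x :|: f x' by case/setIP: cC => cx _; rewrite inE cx.
have only_c a : a \in f x :|: f x' -> a \notin f w -> a = c.
  have := cardsID (f w) (f x :|: f x'); rewrite (setIidPr wU) card_f card_fU_adj // => cUw.
  have /cards1P[c0 Dc0] : #|(f x :|: f x') :\: f w| == 1.
    by apply/eqP; clear -cUw; lia.
  move=> aU aw; have : a \in [set c0] by rewrite -Dc0 inE aw aU.
  have : c \in [set c0] by rewrite -Dc0 inE cw cU.
  by rewrite !inE => /eqP-> /eqP->.
apply/is_cliqueP => a b aU bU ab.
have [/andP[ax bx] | nabx] := boolP ((a \in f x) && (b \in f x)).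
  by have /is_cliqueP := f_clique x; apply.
have [/andP[ax' bx'] | nabx'] := boolP ((a \in f x') && (b \in f x')).
  by have /is_cliqueP := f_clique x'; apply.
have [aC bC] : a \notin f x :&: f x' /\ b \notin f x :&: f x'.
  move: aU bU nabx nabx'; rewrite !inE.
  by case: (a \in f x); case: (a \in f x'); case: (b \in f x); case: (b \in f x').
have in_w t : t \in f x :|: f x' -> t \notin f x :&: f x' -> t \in f w.
  by move=> tU; apply: contraR => tw; rewrite (only_c t tU tw).
by have /is_cliqueP := f_clique w; apply; rewrite ?in_w.
Qed.

Lemma triangle_extra_nbr x x' w : 2 < k -> e x x' -> e x w -> e x' w ->
  ~~ (f x :&: f x' \subset f w) -> exists z, [/\ z != x, z != x', z != w & e w z].
Proof.
move=> k_gt2 exx' exw ex'w nCw.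
have clU := triangle_union_clique exx' exw ex'w nCw.
have wU := adj_common_nbr_sub exx' exw ex'w nCw.
have [c cC cw] := subsetPn nCw.
have [c' c'c c'C] : exists2 c', c' != c & c' \in f x :&: f x'.
  have : 0 < #|(f x :&: f x') :\ c|.
    have := cardsD1 c (f x :&: f x'); rewrite cC card_fI_adj // => cD1.
    by clear -cD1 k_gt2; lia.
  by case/card_gt0P => c'; rewrite in_setD1 => /andP[]; exists c'.
have [c'x c'x'] := setIP c'C.
have [z fz] : exists z, f z = (f x :|: f x') :\ c'.
  apply: (kclique_sub_f clU (subD1set _ _)).
  have := cardsD1 c' (f x :|: f x'); rewrite inE c'x card_fU_adj // => cD1.
  by clear -cD1; lia.
have c'z : c' \notin f z by rewrite fz setD11.
have cz : c \in f z by case/setIP: cC => cx _; rewrite fz in_setD1 eq_sym c'c inE cx.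
have wz : w != z by apply: contraNneq cw => ->.
have zx : z != x by apply: contraNneq c'z => ->.
have zx' : z != x' by apply: contraNneq c'z => ->.
exists z; split => //; first by rewrite eq_sym.
apply: (adj_of_common (S := f w :\ c')) wz (subD1set _ _) _ _.
  by rewrite fz setSD.
by have := cardsD1 c' (f w); rewrite card_f => cD1; clear -cD1; lia.
Qed.

End Representation.

Lemma KTJ_sym (V : finType) (e : rel V) k : KTJ e k -> symmetric e.
Proof. by case=> _ [T [H [_ [f [_ [_ eE]]]]]] x y; rewrite !eE setIC. Qed.

Lemma KTJ_independent_nbrs (V : finType) (e : rel V) k x (N : {set V}) :
  KTJ e k -> (forall y, y \in N -> e x y) -> independent e N -> #|N| <= k.
Proof.
case=> k_gt0 [T [H [_ [f [f_inj [f_cliques eE]]]]]].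
exact: (independent_nbrs_leq f_inj f_cliques eE k_gt0).
Qed.

Lemma KTJ_induced_P3 (V : finType) (e : rel V) k x y z :
  KTJ e k -> e x y -> e x z -> y != z -> ~~ e y z -> 1 < k.
Proof.
move=> K exy exz yz nyz; have e_sym := KTJ_sym K.
have := KTJ_independent_nbrs (x := x) (N := [set y; z]) K; rewrite cards2 yz; apply.
  by move=> w /set2P[]->.
by move=> a b /set2P[]-> /set2P[]->; rewrite ?eqxx // => _; rewrite // e_sym.
Qed.

Lemma card_sum_preim (A B : finType) (S : {set A + B}) :
  #|S| = #|inl @^-1: S| + #|inr @^-1: S|.
Proof.
by rewrite -!sum1_card (big_sumType _ (fun t => t \in S)); congr (_ + _);
  apply: eq_bigl => ?; rewrite inE.
Qed.

Section JoinComplete.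
Variables (U : finType) (h : rel U) (c : nat).

Definition join_complete : rel ('I_c + U)%type := fun a b =>
  match a, b with
  | inl a, inl b => a != b
  | inr a, inr b => h a b
  | _, _ => true
  end.

Definition join_complete_set (A : {set U}) : {set 'I_c + U} :=
  [set t | if t is inr u then u \in A else true].

Lemma join_complete_simple : simple_graph h -> simple_graph join_complete.
Proof.
case=> hsym hirr; split; first by move=> [a|a] [b|b] //=; rewrite eq_sym.
by move=> [a|a] /=; rewrite ?eqxx ?hirr.
Qed.

Lemma join_complete_set_inl A : inl @^-1: join_complete_set A = setT.
Proof. by apply/setP=> a; rewrite !inE. Qed.

Lemma join_complete_set_inr A : inr @^-1: join_complete_set A = A.
Proof. by apply/setP=> a; rewrite !inE. Qed.

Lemma card_join_complete_set A : #|join_complete_set A| = c + #|A|.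
Proof.
by rewrite card_sum_preim join_complete_set_inl join_complete_set_inr cardsT card_ord.
Qed.

Lemma TJ_iso_join_complete (V : finType) (e : rel V) j :
  0 < j -> (forall S, is_clique h S -> #|S| <= j) ->
  TJ_iso e h j -> TJ_iso e join_complete (c + j).
Proof.
move=> j_gt0 small [f [f_inj [f_cliques eE]]].
exists (join_complete_set \o f); split; [|split].
- move=> x y /= fxy; apply: f_inj.
  by rewrite -[f x]join_complete_set_inr fxy join_complete_set_inr.
- move=> A; split; last first.
    case=> x <-; rewrite /is_kclique card_join_complete_set (card_f f_cliques) eqxx /=.
    apply/(is_cliqueP join_complete) => -[a|a] [b|b] //=; rewrite !inE => ax bx.
    by rewrite (inj_eq inr_inj); have /is_cliqueP := f_clique f_cliques x; apply.
  case/andP=> /eqP cA /(is_cliqueP join_complete) clA.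
  have cl : #|inl @^-1: A| <= c by apply: leq_trans (max_card _) _; rewrite card_ord.
  have clr : is_clique h (inr @^-1: A).
    apply/is_cliqueP=> a b; rewrite !inE => aA bA ab.
    by have := clA _ _ aA bA; rewrite /= (inj_eq inr_inj) => /(_ ab).
  have cr := small _ clr.
  have := card_sum_preim A; rewrite cA => cs.
  set nl := #|inl @^-1: A| in cl cs *; set nr := #|inr @^-1: A| in cr cs *.
  have Al : inl @^-1: A = setT.
    by apply/eqP; rewrite eqEcard subsetT cardsT card_ord; lia.
  have [x fx] : exists x, f x = inr @^-1: A.
    by apply/f_cliques/andP; split; first by apply/eqP; lia.
  exists x; apply/setP=> -[a|u]; rewrite inE /=.
    by move/setP: Al => /(_ a); rewrite !inE.
  by rewrite fx inE.
- move=> x y; rewrite eE card_sum_preim !preimsetI /= !join_complete_set_inl.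
  rewrite !join_complete_set_inr setIT cardsT card_ord.
  by rewrite -(prednK j_gt0) addnS /= eqn_add2l.
Qed.

End JoinComplete.

Lemma KTJ_geq (V U : finType) (e : rel V) (h : rel U) j :
  0 < j -> simple_graph h -> (forall S, is_clique h S -> #|S| <= j) ->
  TJ_iso e h j -> forall k, j <= k -> KTJ e k.
Proof.
move=> j_gt0 hs small iso k jk; split; first exact: leq_trans jk.
rewrite -(subnK jk); exists ('I_(k - j) + U)%type, (@join_complete U h (k - j)).
by split; [apply: join_complete_simple | apply: TJ_iso_join_complete].
Qed.

Lemma TJ_iso_transfer (V V' T : finType) (e : rel V) (e' : rel V') (H : rel T) k
    (g : V -> V') :
  bijective g -> (forall x y, e x y = e' (g x) (g y)) -> TJ_iso e' H k -> TJ_iso e H k.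
Proof.
move=> [g' gK g'K] eg [f [f_inj [f_cliques eE]]].
exists (f \o g); split; [exact: inj_comp f_inj (can_inj gK) | split].
- move=> A; rewrite f_cliques; split=> -[x <-]; last by exists (g x).
  by exists (g' x); rewrite /= g'K.
- by move=> x y; rewrite eg eE.
Qed.

Lemma card_set1I (T : finType) (w w' : T) : #|[set w] :&: [set w']| = (w == w').
Proof.
case: (eqVneq w w') => [->|ww']; first by rewrite setIid cards1.
by rewrite (_ : _ :&: _ = set0) ?cards0 //; apply/setP=> z; rewrite !inE;
  apply/negbTE/andP => -[/eqP -> /eqP]; apply/eqP.
Qed.

(* [cone_adj] is a universal vertex [None] joined to the disjoint cliques
   formed by the classes of the labelling [m].  It is represented in
   [cone_host], a [K_j] together with an independent copy of [W], each [w]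
   adjacent to every vertex of the [K_j] except [m w]. *)
Section Cone.
Variables (W : finType) (j : nat) (m : W -> 'I_j).
Hypothesis j_gt0 : 0 < j.

Definition cone_adj : rel (option W) := fun o o' =>
  match o, o' with
  | None, None => false
  | Some w, Some w' => (w != w') && (m w == m w')
  | _, _ => true
  end.

Definition cone_host : rel ('I_j + W)%type := fun a b =>
  match a, b with
  | inl a, inl b => a != b
  | inl a, inr w | inr w, inl a => a != m w
  | inr _, inr _ => false
  end.

Definition cone_set (o : option W) : {set 'I_j + W} :=
  if o is Some w then [set t | match t with inl a => a != m w | inr w' => w' == w end]
  else [set t | if t is inl _ then true else false].

Lemma cone_set_inl o : inl @^-1: cone_set o = if o is Some w then [set~ m w] else setT.
Proof. by case: o => [w|]; apply/setP=> a; rewrite !inE. Qed.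

Lemma cone_set_inr o : inr @^-1: cone_set o = if o is Some w then [set w] else set0.
Proof. by case: o => [w|]; apply/setP=> a; rewrite !inE. Qed.

Lemma card_cone_set o : #|cone_set o| = j.
Proof.
rewrite card_sum_preim cone_set_inl cone_set_inr; case: o => [w|].
  by rewrite cards1 cardsC1 card_ord addn1 prednK.
by rewrite cardsT cards0 card_ord addn0.
Qed.

Lemma cone_host_simple : simple_graph cone_host.
Proof.
split; last by case=> [a|w] /=; rewrite ?eqxx.
by case=> [a|w] [b|w'] //=; rewrite eq_sym.
Qed.

Lemma cone_host_clique (S : {set 'I_j + W}) : is_clique cone_host S ->
  inr @^-1: S = set0 \/
  exists w, inr @^-1: S = [set w] /\ inl @^-1: S \subset [set~ m w].
Proof.
move/is_cliqueP=> clS; case: (set_0Vmem (inr @^-1: S)) => [->|[w]]; first by left.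
rewrite inE => wS; right; exists w; split.
  apply/setP=> w'; rewrite !inE; apply/idP/eqP => [w'S|->//].
  apply/eqP; apply: contraT => w'w.
  by have := clS _ _ w'S wS; rewrite /= (inj_eq inr_inj) => /(_ w'w).
apply/subsetP=> a; rewrite !inE => aS; apply/eqP=> am.
by have := clS _ _ aS wS; rewrite /= am eqxx => /(_ isT).
Qed.

Lemma cone_host_small S : is_clique cone_host S -> #|S| <= j.
Proof.
move=> clS; rewrite card_sum_preim.
case: (cone_host_clique clS) => [->|[w [-> Sl]]].
  by rewrite cards0 addn0 (leq_trans (max_card _)) ?card_ord.
have := subset_leq_card Sl; rewrite cards1 cardsC1 card_ord.
by set nl := #|inl @^-1: S|; lia.
Qed.

Lemma cone_set_inj : injective cone_set.
Proof.
move=> o o' oo'; have := cone_set_inr o; rewrite oo' cone_set_inr.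
case: o oo' => [w|]; case: o' => [w'|] // _ /setP.
- by move=> /(_ w); rewrite !inE eqxx => wE; congr Some; apply/eqP; rewrite wE.
- by move=> /(_ w); rewrite !inE eqxx.
- by move=> /(_ w'); rewrite !inE eqxx.
Qed.

Lemma cone_set_cliques A : is_kclique cone_host j A <-> exists o, cone_set o = A.
Proof.
split; last first.
  case=> o <-; rewrite /is_kclique card_cone_set eqxx /=.
  apply/(is_cliqueP cone_host) => -[a|w] [b|w']; case: o => [v|]; rewrite !inE //=.
  - by move=> ? /eqP ->.
  - by move=> /eqP -> ?.
  - by move=> /eqP -> /eqP ->; rewrite eqxx.
case/andP=> /eqP cA clA; have := card_sum_preim A; rewrite cA.
case: (cone_host_clique clA) => [Ar|[w [Ar Al]]].
  rewrite Ar cards0 addn0 => cAl; exists None.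
  have {}Al : inl @^-1: A = setT.
    by apply/eqP; rewrite eqEcard subsetT cardsT card_ord /=; apply: eq_leq.
  apply/setP=> -[a|w]; rewrite inE.
    by move/setP: Al => /(_ a); rewrite !inE.
  by move/setP: Ar => /(_ w); rewrite !inE.
rewrite Ar cards1 addn1 => cAl; exists (Some w).
have {}Al : inl @^-1: A = [set~ m w].
  apply/eqP; rewrite eqEcard Al cardsC1 card_ord /=.
  by apply: eq_leq; apply: (congr1 predn cAl).
apply/setP=> -[a|w']; rewrite inE.
  by move/setP: Al => /(_ a); rewrite !inE.
by move/setP: Ar => /(_ w'); rewrite !inE.
Qed.

Lemma card_setC1I (a b : 'I_j) : #|[set~ a] :&: [set~ b]| = j - (a != b).+1.
Proof. by rewrite -setCU -cards2; have := cardsC [set a; b]; rewrite card_ord; lia. Qed.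

Lemma cone_adjE o o' : cone_adj o o' = (#|cone_set o :&: cone_set o'| == j.-1).
Proof.
rewrite card_sum_preim !preimsetI !cone_set_inl !cone_set_inr.
case: o => [w|]; case: o' => [w'|] /=.
- rewrite card_setC1I card_set1I; case: (eqVneq w w') => [->|ww'] /=.
    by rewrite eqxx; lia.
  case: (eqVneq (m w) (m w')) => [_|mm] /=; first lia.
  suff : 1 < j by lia.
  by move: mm; rewrite -val_eqE /=; have := ltn_ord (m w); have := ltn_ord (m w'); lia.
- by rewrite setIT setI0 cards0 addn0 cardsC1 card_ord eqxx.
- by rewrite setTI set0I cards0 addn0 cardsC1 card_ord eqxx.
- by rewrite setIT setI0 cards0 cardsT card_ord; lia.
Qed.

Lemma TJ_iso_cone : TJ_iso cone_adj cone_host j.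
Proof.
exists cone_set; split; first exact: cone_set_inj.
by split; [exact: cone_set_cliques | exact: cone_adjE].
Qed.

Lemma KTJ_cone (V : finType) (e : rel V) (g : V -> option W) :
  bijective g -> (forall x y, e x y = cone_adj (g x) (g y)) -> forall k, j <= k -> KTJ e k.
Proof.
move=> g_bij eg; apply: KTJ_geq j_gt0 cone_host_simple cone_host_small _.
exact: TJ_iso_transfer g_bij eg TJ_iso_cone.
Qed.

End Cone.

Lemma KTJ_complete (V : finType) (e : rel V) :
  (forall x y, e x y = (x != y)) -> forall k, 0 < k -> KTJ e k.
Proof.
move=> eE; apply: (@KTJ_geq V V e (fun _ _ => false)) => //.
- move=> S /is_cliqueP clS; rewrite leqNgt; apply/card_gt1P => -[a [b [aS bS ab]]].
  by have := clS _ _ aS bS ab.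
- exists (fun x => [set x]); split; [exact: set1_inj | split].
    move=> A; split; last first.
      case=> x <-; rewrite /is_kclique cards1 /=.
      by apply/(is_cliqueP (fun _ _ => false)) => a b /set1P-> /set1P->; rewrite eqxx.
    by case/andP=> /cards1P[x ->] _; exists x.
  by move=> x y; rewrite eE card_set1I; case: eqP.
Qed.

Lemma KTJ_completeE (V : finType) (e : rel V) :
  (forall x y, e x y = (x != y)) -> forall k, KTJ e k <-> 0 < k.
Proof. by move=> eE k; split; [case | apply: KTJ_complete]. Qed.

Lemma card_set2I (T : finType) (u v : T) (S : {set T}) : u != v ->
  #|[set u; v] :&: S| = (u \in S) + (v \in S).
Proof.
move=> uv; case uS: (u \in S); case vS: (v \in S).
- by rewrite (setIidPl _) ?cards2 ?uv // subUset !sub1set uS vS.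
- rewrite (_ : _ :&: _ = [set u]) ?cards1 //; apply/setP=> t; rewrite !inE.
  by case: (eqVneq t u) => [->|_] //=; case: (eqVneq t v) => [->|]; rewrite ?vS.
- rewrite (_ : _ :&: _ = [set v]) ?cards1 //; apply/setP=> t; rewrite !inE.
  case: (eqVneq t v) => [->|_]; first by rewrite orbT vS.
  by rewrite orbF; case: (eqVneq t u) => [->|]; rewrite ?uS.
- rewrite (_ : _ :&: _ = set0) ?cards0 //; apply/setP=> t; rewrite !inE.
  by apply/negbTE/andP => -[/orP[]/eqP->]; rewrite ?uS ?vS.
Qed.

Section EdgeRepresentation.
Variables (V U : finType) (e : rel V) (h : rel U) (a b : V -> U).
Hypotheses (h_sym : symmetric h) (ab_edge : forall x, (a x != b x) && h (a x) (b x)).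

Definition edge_set x := [set a x; b x].

Lemma card_edge_setI x y : #|edge_set x :&: edge_set y| =
  ((a x == a y) || (a x == b y)) + ((b x == a y) || (b x == b y)).
Proof. by have /andP[abx _] := ab_edge x; rewrite card_set2I // !in_set2. Qed.

Lemma TJ_iso_edges :
  (forall x y, ((a x == a y) || (a x == b y)) && ((b x == a y) || (b x == b y)) -> x = y) ->
  (forall u v, u != v -> h u v -> exists x, edge_set x = [set u; v]) ->
  (forall x y, e x y =
     (((a x == a y) || (a x == b y)) + ((b x == a y) || (b x == b y)) == 1)) ->
  TJ_iso e h 2.
Proof.
move=> distinct onto eE; exists edge_set; split; [|split].
- move=> x y fxy; apply: distinct; have := card_edge_setI x y.
  have /andP[aby _] := ab_edge y; rewrite fxy setIid cards2 aby.
  by case: (_ || _); case: (_ || _).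
- move=> A; split.
    case/andP=> /cards2P[u [v [uv ->]]] /is_cliqueP clA.
    exact: onto uv (clA u v (set21 u v) (set22 u v) uv).
  case=> x <-; have /andP[abx hab] := ab_edge x.
  rewrite /is_kclique cards2 abx /=; apply/is_cliqueP => u v.
  by rewrite !inE => /orP[]/eqP-> /orP[]/eqP->; rewrite ?eqxx // h_sym.
- by move=> x y; rewrite eE card_edge_setI.
Qed.

End EdgeRepresentation.

Lemma path_rel_simple n : simple_graph (path_rel n).
Proof. by split=> [x y | x]; rewrite /path_rel; lia. Qed.

Lemma path_rel_small n (S : {set 'I_n}) : is_clique (path_rel n) S -> #|S| <= 2.
Proof.
move/is_cliqueP=> clS; rewrite leqNgt; apply/card_gt2P.
case=> x [y [z [[xS yS zS] [xy yz zx]]]].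
have := clS _ _ xS yS xy; have := clS _ _ yS zS yz; have := clS _ _ zS xS zx.
rewrite /path_rel; lia.
Qed.

Lemma TJ_iso_path n : TJ_iso (path_rel n) (path_rel n.+1) 2.
Proof.
apply: (@TJ_iso_edges _ _ _ _ (widen_ord (leqnSn n)) (lift ord0)).
- by case: (path_rel_simple n.+1).
- by move=> i; rewrite /path_rel -val_eqE /= /bump leq0n; lia.
- by move=> x y; rewrite -!val_eqE /= /bump leq0n => xy; apply: ord_inj; move: xy; lia.
- move=> u v uv; rewrite /path_rel => /orP[]/eqP uv_adj.
    have u_lt : u < n by have := ltn_ord v; lia.
    by exists (Ordinal u_lt); congr [set _; _]; apply: ord_inj; rewrite ?lift0.
  have v_lt : v < n by have := ltn_ord u; lia.
  by exists (Ordinal v_lt); rewrite setUC; congr [set _; _]; apply: ord_inj; rewrite ?lift0.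
- by move=> x y; rewrite /path_rel -!val_eqE /= /bump leq0n; lia.
Qed.

Lemma KTJ_path n k : 1 < k -> KTJ (path_rel n) k.
Proof.
exact: KTJ_geq (ltn0Sn 1) (path_rel_simple n.+1) (@path_rel_small n.+1) (TJ_iso_path n) k.
Qed.

Lemma ord_succ_mod n (i : 'I_n) :
  (i.+1 %% n = i.+1 /\ i.+1 < n) \/ (i.+1 %% n = 0 /\ i.+1 = n).
Proof.
have := ltn_ord i; case: (ltngtP i.+1 n) => [lt | gt | eq] i_lt.
- by left; rewrite modn_small.
- lia.
- by right; rewrite eq modnn.
Qed.

Lemma cycle_rel_simple n : 2 < n -> simple_graph (cycle_rel n).
Proof.
move=> n_gt2; split=> [x y | x]; rewrite /cycle_rel; first lia.
by case: (ord_succ_mod x) => -[-> ?]; lia.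
Qed.

Lemma cycle_rel_small n :
  3 < n -> forall S : {set 'I_n}, is_clique (cycle_rel n) S -> #|S| <= 2.
Proof.
move=> n_gt3 S /is_cliqueP clS; rewrite leqNgt; apply/card_gt2P.
case=> x [y [z [[xS yS zS] [xy yz zx]]]].
have := clS _ _ xS yS xy; have := clS _ _ yS zS yz; have := clS _ _ zS xS zx.
move: xy yz zx; rewrite -!val_eqE /= /cycle_rel.
by case: (ord_succ_mod x) => -[-> ?]; case: (ord_succ_mod y) => -[-> ?];
  case: (ord_succ_mod z) => -[-> ?]; lia.
Qed.

Lemma TJ_iso_cycle n : 3 < n -> TJ_iso (cycle_rel n) (cycle_rel n) 2.
Proof.
move=> n_gt3; apply: (@TJ_iso_edges _ _ _ _ id (@ordS n)).
- by case: (@cycle_rel_simple n) => //; lia.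
- move=> i; rewrite /cycle_rel -val_eqE /=.
  by case: (ord_succ_mod i) => -[-> ?]; lia.
- move=> x y; rewrite -!val_eqE /= => xy; apply: ord_inj; move: xy.
  by case: (ord_succ_mod x) => -[-> ?]; case: (ord_succ_mod y) => -[-> ?]; lia.
- move=> u v uv; rewrite /cycle_rel => /orP[]/eqP uv_adj.
    by exists u; congr [set _; _]; apply: val_inj.
  by exists v; rewrite setUC; congr [set _; _]; apply: val_inj.
- move=> x y; rewrite /cycle_rel -!val_eqE /=.
  by case: (ord_succ_mod x) => -[-> ?]; case: (ord_succ_mod y) => -[-> ?]; lia.
Qed.

Lemma KTJ_cycle n k : 3 < n -> 1 < k -> KTJ (cycle_rel n) k.
Proof.
move=> n_gt3; have n_gt2 : 2 < n by apply: ltnW.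
exact: KTJ_geq (ltn0Sn 1) (cycle_rel_simple n_gt2) (cycle_rel_small n_gt3)
  (TJ_iso_cycle n_gt3) k.
Qed.

Lemma KTJ_pathE n : 2 < n -> forall k, KTJ (path_rel n) k <-> 1 < k.
Proof.
move=> n_gt2 k; split; last exact: KTJ_path.
have [o0 o1 o2] : [/\ 0 < n, 1 < n & 2 < n] by split; lia.
by move=> K; apply: (@KTJ_induced_P3 _ _ _ (Ordinal o1) (Ordinal o0) (Ordinal o2) K).
Qed.

Lemma KTJ_cycleE n : 3 < n -> forall k, KTJ (cycle_rel n) k <-> 1 < k.
Proof.
move=> n_gt3 k; split; last exact: KTJ_cycle.
have [o0 o1 o2] : [/\ 0 < n, 1 < n & 2 < n] by split; lia.
move=> K; apply: (@KTJ_induced_P3 _ _ _ (Ordinal o1) (Ordinal o0) (Ordinal o2) K);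
  by rewrite /cycle_rel /= ?modn_small //; lia.
Qed.

Lemma KTJ_starE n : 0 < n -> forall k, KTJ (cbip_rel 1 n) k <-> n <= k.
Proof.
move=> n_gt0 k; split=> [K | ].
  have := KTJ_independent_nbrs (x := inl ord0) (N := [set inr i | i : 'I_n]) K.
  rewrite card_imset ?card_ord; last exact: inr_inj.
  apply; first by move=> _ /imsetP[i _ ->].
  by move=> _ _ /imsetP[i _ ->] /imsetP[i' _ ->].
apply: (@KTJ_cone _ n id n_gt0 _ _ (fun v => if v is inr i then Some i else None)).
  exists (fun o => if o is Some i then inr i else inl ord0); last by case.
  by case=> [x|i] //=; rewrite (ord1 x).
by move=> [x|i] [y|i'] //=; case: eqP.
Qed.

Lemma not_KTJ_cbip m n : 1 < m -> 2 < n -> forall k, ~ KTJ (cbip_rel m n) k.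
Proof.
move=> m_gt1 n_gt2 k [k_gt0 [T [H [_ [f [f_inj [f_cliques eE]]]]]]].
have m_gt0 : 0 < m by apply: ltnW.
have : #|[set (inr i : 'I_m + 'I_n) | i : 'I_n]| <= 2.
  apply: (@nonadj_common_nbrs_leq2 _ _ _ _ _ _ f_inj f_cliques eE k_gt0
    (inl (Ordinal m_gt0)) (inl (Ordinal m_gt1))) => //.
  - by move=> _ /imsetP[i _ ->].
  - by move=> _ _ /imsetP[i _ ->] /imsetP[i' _ ->].
by rewrite card_imset ?card_ord; [by rewrite leqNgt n_gt2 | exact: inr_inj].
Qed.

Lemma not_KTJ_book p : 2 < p -> forall k, ~ KTJ (book_rel p) k.
Proof.
move=> p_gt2 k [k_gt0 [T [H [_ [f [f_inj [f_cliques eE]]]]]]].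
pose apex (i : 'I_p) : 'I_p.+2 := lift ord0 (lift ord0 i).
have : #|[set apex i | i : 'I_p]| <= 2.
  apply: (@adj_common_nbrs_leq2 _ _ _ _ _ _ f_inj f_cliques eE k_gt0 ord0 (lift ord0 ord0)).
  - by [].
  - by move=> _ /imsetP[i _ ->]; rewrite /book_rel -!val_eqE.
  - by move=> _ _ /imsetP[i _ ->] /imsetP[i' _ ->]; rewrite /book_rel /= andbF.
rewrite card_imset ?card_ord; first by rewrite leqNgt p_gt2.
by move=> i i' /lift_inj/lift_inj.
Qed.

Lemma KTJ_friendE p : 0 < p -> forall k, KTJ (friend_rel p) k <-> p <= k.
Proof.
move=> p_gt0 k; split=> [K | ].
  have double_lt (i : 'I_p) : i.*2 < p.*2 by rewrite ltn_double.
  pose leaf (i : 'I_p) : 'I_p.*2.+1 := lift ord0 (Ordinal (double_lt i)).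
  have := KTJ_independent_nbrs (x := ord0) (N := [set leaf i | i : 'I_p]) K.
  rewrite card_imset ?card_ord; last first.
    by move=> i i' /lift_inj/(congr1 val)/double_inj/val_inj.
  apply; first by move=> _ /imsetP[i _ ->]; rewrite /friend_rel neq_lift.
  move=> _ _ /imsetP[i _ ->] /imsetP[i' _ ->] ii'.
  rewrite /friend_rel /= ii' /= !doubleK.
  by apply: contra ii' => /eqP/val_inj->.
have half_lt (w : 'I_p.*2) : w./2 < p by rewrite ltn_half_double.
apply: (@KTJ_cone _ p (fun w => Ordinal (half_lt w)) p_gt0 _ _ (unlift ord0)).
  exists (fun o => if o is Some i then lift ord0 i else ord0).
    by move=> v; case: unliftP.
  by case=> [i|] /=; rewrite ?liftK ?unlift_none.
move=> x y; case: (unliftP ord0 x) => [i ->|->]; case: (unliftP ord0 y) => [i' ->|->] //=.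
Qed.

(* The paw: a triangle [0 1 2] with a pendant vertex [3] attached at [2]. *)
Definition paw : rel 'I_4 := fun u v =>
  [&& u != v, ((u : nat) == 3) ==> ((v : nat) == 2) & ((v : nat) == 3) ==> ((u : nat) == 2)].

(* The spine vertices [0], [1] of [B_2] become the edges [12], [02] of the paw,
   the apexes [2], [3] the edges [01], [23]. *)
Definition paw_end1 (i : 'I_4) : 'I_4 :=
  nth ord0 [:: Ordinal (isT : 1 < 4); ord0; ord0; Ordinal (isT : 2 < 4)] i.
Definition paw_end2 (i : 'I_4) : 'I_4 :=
  nth ord0 [:: Ordinal (isT : 2 < 4); Ordinal (isT : 2 < 4); Ordinal (isT : 1 < 4);
              Ordinal (isT : 3 < 4)] i.

Lemma TJ_iso_book2 : TJ_iso (book_rel 2) paw 2.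
Proof.
apply: (@TJ_iso_edges _ _ _ _ paw_end1 paw_end2).
- by move=> u v; rewrite /paw eq_sym; congr (_ && _); apply: andbC.
- by case=> [[|[|[|[|x]]]] Hx].
- by case=> [[|[|[|[|x]]]] Hx] // [[|[|[|[|y]]]] Hy] // _; apply: val_inj.
- have edge_setE w u v :
      (paw_end1 w == u) && (paw_end2 w == v) || (paw_end1 w == v) && (paw_end2 w == u) ->
      edge_set paw_end1 paw_end2 w = [set u; v].
    by rewrite /edge_set; case/orP=> /andP[/eqP-> /eqP->] //; rewrite setUC.
  move=> u v _; rewrite /paw.
  case: u => [[|[|[|[|u]]]] Hu] //; case: v => [[|[|[|[|v]]]] Hv] //= _;
    first [ by exists ord0; apply: edge_setE
          | by exists (Ordinal (isT : 1 < 4)); apply: edge_setE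
          | by exists (Ordinal (isT : 2 < 4)); apply: edge_setE
          | by exists (Ordinal (isT : 3 < 4)); apply: edge_setE ].
- by case=> [[|[|[|[|x]]]] Hx] // [[|[|[|[|y]]]] Hy].
Qed.

Lemma paw_simple : simple_graph paw.
Proof. by split=> [u v | u]; rewrite /paw ?eqxx // eq_sym; congr (_ && _); apply: andbC. Qed.

Lemma KTJ_book2E k : KTJ (book_rel 2) k <-> k = 2.
Proof.
split=> [K | ->]; last first.
  by split=> //; exists 'I_4, paw; split; [exact: paw_simple | exact: TJ_iso_book2].
pose s0 : 'I_4 := ord0; pose s1 : 'I_4 := Ordinal (isT : 1 < 4).
pose a2 : 'I_4 := Ordinal (isT : 2 < 4); pose a3 : 'I_4 := Ordinal (isT : 3 < 4).
have k_gt1 : 1 < k by apply: (@KTJ_induced_P3 _ _ _ s0 a2 a3 K).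
case: (ltngtP k 2) => // k_gt2; first by rewrite ltnNge k_gt1 in k_gt2.
exfalso; case: K => k_gt0 [T [H [_ [f [f_inj [f_cliques eE]]]]]].
have spine_adj (w : 'I_4) : 1 < w -> book_rel 2 s0 w && book_rel 2 s1 w.
  by rewrite /book_rel -!val_eqE /=; lia.
have extra_nbr (w : 'I_4) : 1 < w -> ~~ (f s0 :&: f s1 \subset f w) -> False.
  move=> w_apex nCw; have /andP[s0w s1w] := spine_adj w w_apex.
  have [z [zs0 zs1 _ wz]] :=
    @triangle_extra_nbr _ _ _ _ _ _ f_inj f_cliques eE k_gt0 s0 s1 w k_gt2 isT s0w s1w nCw.
  by move: wz zs0 zs1; rewrite /book_rel -!val_eqE /=; lia.
have /andP[s0a2 s1a2] := spine_adj a2 isT; have /andP[s0a3 s1a3] := spine_adj a3 isT.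
have [C2 | /(extra_nbr a2 isT)//] := boolP (f s0 :&: f s1 \subset f a2).
have [C3 | /(extra_nbr a3 isT)//] := boolP (f s0 :&: f s1 \subset f a3).
suff : book_rel 2 a2 a3 by [].
apply: (@adj_common_nbrs_adj _ _ _ _ _ _ f_inj f_cliques eE k_gt0 s0 s1) => //.
by rewrite C2 C3.
Qed.

Theorem theorem4p8 :
  (forall n : nat, 1 <= n -> forall k : nat, KTJ (complete_rel n) k <-> 1 <= k) /\
  (forall k : nat, KTJ (path_rel 2) k <-> 1 <= k) /\
  (forall n : nat, 3 <= n -> forall k : nat, KTJ (path_rel n) k <-> 2 <= k) /\
  (forall k : nat, KTJ (cycle_rel 3) k <-> 1 <= k) /\
  (forall n : nat, 4 <= n -> forall k : nat, KTJ (cycle_rel n) k <-> 2 <= k) /\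
  (forall k : nat, KTJ (cbip_rel 1 1) k <-> 1 <= k) /\
  (forall k : nat, KTJ (cbip_rel 1 2) k <-> 2 <= k) /\
  (forall n : nat, 3 <= n -> forall k : nat, KTJ (cbip_rel 1 n) k <-> n <= k) /\
  (forall m n : nat, 2 <= m -> m <= n -> 3 <= n -> forall k : nat, ~ KTJ (cbip_rel m n) k) /\
  (forall k : nat, KTJ (book_rel 1) k <-> 1 <= k) /\
  (forall k : nat, KTJ (book_rel 2) k <-> k = 2) /\
  (forall p : nat, 3 <= p -> forall k : nat, ~ KTJ (book_rel p) k) /\
  (forall k : nat, KTJ (friend_rel 1) k <-> 1 <= k) /\
  (forall p : nat, 2 <= p -> forall k : nat, KTJ (friend_rel p) k <-> p <= k).
Proof.
split; first by move=> n _; apply: KTJ_completeE.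
split; first by apply: KTJ_completeE; case=> [[|[|?]] ?] // [[|[|?]] ?].
split; first exact: KTJ_pathE.
split; first by apply: KTJ_completeE; case=> [[|[|[|?]]] ?] // [[|[|[|?]]] ?].
split; first exact: KTJ_cycleE.
split; first exact: KTJ_starE.
split; first exact: KTJ_starE.
split; first by move=> n n_gt2; apply/KTJ_starE/ltnW/ltnW.
split; first by move=> m n m_gt1 _; apply: not_KTJ_cbip.
split; first by apply: KTJ_completeE; case=> [[|[|[|?]]] ?] // [[|[|[|?]]] ?].
split; first exact: KTJ_book2E.
split; first exact: not_KTJ_book.
split; first exact: KTJ_friendE.
by move=> p p_gt1; apply/KTJ_friendE/ltnW.
Qed.
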